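(* Let $G$ be a connected split graph whose vertex set is partitioned into a clique of order $r$ and an independent set of order $s$. Then for every integer $t\ge 3$, $\varphi(G^t)=\frac{1}{2}(r+s-1)(r+s-2)$.
   Context: All graphs are finite, simple and without isolated vertices. $\mathbb{N}_0$ denotes the set of non-negative integers; for finite $A,B\subseteq\mathbb{N}_0$, $A+B=\{a+b: a\in A, b\in B\}$. An integer additive set-indexer (IASI) of a graph $G$ is an injective map $f$ from $V(G)$ to the finite non-empty subsets of $\mathbb{N}_0$ such that the induced edge map $f^+(uv)=f(u)+f(v)$ is injective on $E(G)$. A weak IASI (WIASI) is an IASI $f$ with $|f^+(uv)|=\max(|f(u)|,|f(v)|)$ for every edge $uv$ (equivalently, for every edge at least one end vertex has a singleton label). A vertex or edge is mono-indexed if its set-label has cardinality $1$. Every graph admits a WIASI. The sparing number $\varphi(G)$ is the minimum, over all WIASIs of $G$, of the number of mono-indexed edges of $G$. The $t$-th power $G^t$ has vertex set $V(G)$, two distinct vertices being adjacent iff their distance in $G$ is at most $t$. A split graph is a graph whose vertex set can be partitioned into a clique and an independent set. *)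

From mathcomp Require Import all_boot.
Set Implicit Arguments. Unset Strict Implicit. Unset Printing Implicit Defensive.

(* A finite subset of N_0 is represented by a seq nat (duplicates/order
   irrelevant); set equality is membership equality (=i), cardinality is
   the number of distinct elements. *)
Definition ncard (A : seq nat) : nat := size (undup A).

Definition sumset (A B : seq nat) : seq nat :=
  undup [seq a + b | a <- A, b <- B].

Section Graphs.
Variable T : finType.

Definition simple_graph (e : rel T) : Prop :=
  symmetric e /\ irreflexive e.

Definition no_isolated (e : rel T) : Prop := forall u, exists v, e u v.

Definition connected (e : rel T) : Prop := forall u v, connect e u v.

Fixpoint within (e : rel T) (k : nat) (u v : T) : bool :=
  match k with
  | 0 => u == v
  | k'.+1 => within e k' u v || [exists w, within e k' u w && e w v]
  end.

Definition graph_pow (e : rel T) (t : nat) : rel T :=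
  fun u v => (u != v) && within e t u v.

Definition IASI (e : rel T) (f : T -> seq nat) : Prop :=
  (forall u, f u != [::]) /\
  (forall u v, f u =i f v -> u = v) /\
  (forall u v x y, e u v -> e x y ->
     sumset (f u) (f v) =i sumset (f x) (f y) -> [set u; v] = [set x; y]).

Definition WIASI (e : rel T) (f : T -> seq nat) : Prop :=
  IASI e f /\
  (forall u v, e u v -> ncard (sumset (f u) (f v)) = maxn (ncard (f u)) (ncard (f v))).

Definition mono_edges (e : rel T) (f : T -> seq nat) : {set {set T}} :=
  [set E : {set T} | [exists u, exists v,
     [&& E == [set u; v], e u v & ncard (sumset (f u) (f v)) == 1]]].

Definition sparing_number_is (e : rel T) (n : nat) : Prop :=
  (exists f, WIASI e f /\ #|mono_edges e f| = n) /\
  (forall f, WIASI e f -> n <= #|mono_edges e f|).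

End Graphs.

(* For [t >= 3] the power [G^t] of a split graph without isolated vertices is
   complete: every vertex lies in the clique or next to it.  In a complete graph
   a weak IASI gives a non-singleton label to at most one vertex, because an
   edge joining two such vertices would carry a label strictly larger than both
   ends.  The mono-indexed edges are exactly the pairs of singleton-labelled
   vertices, so there are at least [C(n-1, 2)] of them; labelling one vertex
   [{0, 1}] and the others by distinct powers of two attains this bound. *)

From mathcomp Require Import all_boot zify.
Set Implicit Arguments. Unset Strict Implicit. Unset Printing Implicit Defensive.

Lemma mem_sumsetP A B x :
  reflect (exists a b, [/\ a \in A, b \in B & x = a + b]) (x \in sumset A B).
Proof.
rewrite /sumset mem_undup; apply: (iffP allpairsP).
  by case=> [[a b] /= [ha hb ->]]; exists a, b.
by case=> a [b [ha hb ->]]; exists (a, b).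
Qed.

Lemma sumsetC A B : sumset A B =i sumset B A.
Proof.
by move=> x; apply/mem_sumsetP/mem_sumsetP => -[a [b [ha hb ->]]];
  exists b, a; rewrite addnC.
Qed.

Lemma eq_ncard A B : A =i B -> ncard A = ncard B.
Proof.
move=> eqAB; apply: perm_size; apply: uniq_perm; rewrite ?undup_uniq //.
by move=> x; rewrite !mem_undup eqAB.
Qed.

Lemma ncard_map f A : injective f -> ncard (map f A) = ncard A.
Proof. by move=> inj_f; rewrite /ncard undup_map_inj // size_map. Qed.

Lemma ncard_gt0 A : (0 < ncard A) = (A != [::]).
Proof. by rewrite /ncard -has_predT has_undup has_predT lt0n size_eq0. Qed.

Lemma ncard_eq1P A : reflect (exists c, A =i [:: c]) (ncard A == 1).
Proof.
apply: (iffP eqP) => [|[c eqA]]; last by rewrite (eq_ncard eqA).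
rewrite /ncard; case E: (undup A) => [|c [|]] //= _.
by exists c => x; rewrite -mem_undup E.
Qed.

Lemma ncard_gt1P A : reflect (exists b1 b2, [/\ b1 \in A, b2 \in A & b1 < b2])
  (1 < ncard A).
Proof.
apply: (iffP idP) => [|[b1 [b2 [h1 h2 lt12]]]].
  rewrite /ncard; have := undup_uniq A; have := mem_undup A.
  case: (undup A) => [|x [|y s]] // memA /andP [+ _] _; rewrite inE negb_or.
  case/andP=> neq_xy _; have [hx hy] : x \in A /\ y \in A.
    by rewrite -!memA !inE !eqxx orbT.
  by case: (ltngtP x y) neq_xy => // lt _; [exists x, y | exists y, x].
rewrite /ncard; apply: (@uniq_leq_size _ [:: b1; b2]); rewrite /= ?inE ?ltn_eqF //.
by move=> x; rewrite !inE mem_undup => /orP [] /eqP ->.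
Qed.

Lemma max_seq_mem (A : seq nat) : A != [::] -> \max_(a <- A) a \in A.
Proof.
elim: A => // a [|b A] IH _; first by rewrite big_seq1 mem_seq1.
rewrite big_cons inE /maxn; case: ltnP => _; rewrite ?eqxx ?IH ?orbT //.
Qed.

Lemma ncard_sumsetl A B : B != [::] -> ncard A <= ncard (sumset A B).
Proof.
case: B => // b B _; rewrite /ncard -(size_map (addn^~ b)).
apply: uniq_leq_size; first by rewrite map_inj_uniq ?undup_uniq //; exact: addIn.
move=> _ /mapP [a ha ->]; rewrite mem_undup; apply/mem_sumsetP.
by exists a, b; rewrite -mem_undup ha inE eqxx.
Qed.

Lemma ncard_sumsetr A B : A != [::] -> ncard B <= ncard (sumset A B).
Proof. by move=> nzA; rewrite (eq_ncard (sumsetC A B)) ncard_sumsetl. Qed.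

(* For [b1 < b2] in [B], the sums [a + b1] and [max A + b2] are pairwise distinct. *)
Lemma ncard_sumsetl_lt A B :
  A != [::] -> 1 < ncard B -> ncard A < ncard (sumset A B).
Proof.
move=> /max_seq_mem maxA /ncard_gt1P [b1 [b2 [hb1 hb2 lt12]]].
set m := \max_(a <- A) a in maxA.
have le_m a : a \in A -> a <= m by move=> ha; exact: (leq_bigmax_seq a ha).
rewrite /ncard -(size_map (addn^~ b1)) -(size_rcons _ (m + b2)).
apply: uniq_leq_size.
  rewrite rcons_uniq map_inj_uniq ?undup_uniq ?andbT; last exact: addIn.
  by apply/mapP => -[a]; rewrite mem_undup => /le_m ha; lia.
move=> x; rewrite mem_rcons inE mem_undup => /orP [/eqP ->|/mapP [a ha ->]];
  apply/mem_sumsetP; first by exists m, b2.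
by exists a, b1; rewrite -mem_undup.
Qed.

Lemma ncard_sumset1 A B : ncard B = 1 -> ncard (sumset A B) = ncard A.
Proof.
move/eqP/ncard_eq1P => [b eqB]; rewrite -(ncard_map A (@addIn b)).
apply: eq_ncard => x; apply/mem_sumsetP/mapP => [[a [b' [ha]]]|[a ha ->]].
  by rewrite eqB mem_seq1 => /eqP -> ->; exists a.
by exists a, b; rewrite eqB mem_seq1.
Qed.

Lemma ncard_sumset_eq1 A B : A != [::] -> B != [::] ->
  (ncard (sumset A B) == 1) = (ncard A == 1) && (ncard B == 1).
Proof.
move=> nzA nzB; apply/eqP/andP => [eq1|[/eqP eqA /eqP eqB]].
  have := ncard_sumsetl A nzB; have := ncard_sumsetr B nzA.
  by rewrite -!ncard_gt0 in nzA nzB; rewrite eq1; lia.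
by rewrite ncard_sumset1.
Qed.

Lemma ncard_sumset_max A B : A != [::] -> B != [::] ->
  (ncard A == 1) || (ncard B == 1) ->
  ncard (sumset A B) = maxn (ncard A) (ncard B).
Proof.
rewrite -!ncard_gt0 => gtA gtB /orP [/eqP eqA|/eqP eqB].
  by rewrite (eq_ncard (sumsetC A B)) ncard_sumset1 // eqA; lia.
by rewrite ncard_sumset1 // eqB; lia.
Qed.

Section Walks.
Variables (T : finType) (e : rel T).

Lemma within_refl k u : within e k u u.
Proof. by elim: k => [|k IH] /=; rewrite ?eqxx ?IH. Qed.

Lemma within_add k1 k2 u w v :
  within e k1 u w -> within e k2 w v -> within e (k1 + k2) u v.
Proof.
move=> uw; elim: k2 v => [|k IH] v /=; first by rewrite addn0 => /eqP <-.
rewrite addnS /= => /orP [/IH -> //|/existsP [w' /andP [ww' e_w'v]]].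
by apply/orP; right; apply/existsP; exists w'; rewrite IH.
Qed.

Lemma within_leq k1 k2 u v : k1 <= k2 -> within e k1 u v -> within e k2 u v.
Proof. by move=> /subnKC <- /within_add; apply; exact: within_refl. Qed.

Lemma within1 u v : (u == v) || e u v -> within e 1 u v.
Proof.
case/orP => [/eqP ->|uv]; first exact: within_refl.
by apply/orP; right; apply/existsP; exists u; rewrite /= eqxx.
Qed.

(* Every vertex is in the clique [K] or, having a neighbour and no neighbour in
   the independent set [S], adjacent to [K]; hence the diameter is at most 3. *)
Lemma split_graph_pow_complete (K S : {set T}) t :
  simple_graph e -> no_isolated e -> K :|: S = [set: T] ->
  (forall u v, u \in K -> v \in K -> u != v -> e u v) ->
  (forall u v, u \in S -> v \in S -> ~~ e u v) ->
  3 <= t -> forall u v, graph_pow e t u v = (u != v).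
Proof.
move=> [sym_e _] no_iso KS clique indep t_ge3 u v; rewrite /graph_pow.
have [//|_ /=] := eqVneq u v.
have memKS x : x \in K :|: S by rewrite KS inE.
have near_K x : exists2 w, w \in K & (x == w) || e x w.
  move: (memKS x); rewrite inE => /orP [xK|xS]; first by exists x; rewrite ?eqxx.
  have [w xw] := no_iso x; exists w; last by rewrite xw orbT.
  move: (memKS w); rewrite inE => /orP [//|wS].
  by move: (indep _ _ xS wS); rewrite xw.
have [w1 w1K uw1] := near_K u; have [w2 w2K vw2] := near_K v.
have w1w2 : within e 1 w1 w2.
  by apply: within1; have [//|ne12] := eqVneq w1 w2; rewrite clique.
have w2v : within e 1 w2 v by apply: within1; rewrite eq_sym sym_e.
apply: within_leq t_ge3 _.
exact: (within_add (within_add (within1 uw1) w1w2) w2v).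
Qed.

End Walks.

Lemma logn2_addpow2 a b : a < b -> logn 2 (2 ^ a + 2 ^ b) = a.
Proof.
move=> lt_ab; have -> : 2 ^ a + 2 ^ b = 2 ^ a * (2 ^ (b - a) + 1).
  by rewrite mulnDr muln1 -expnD subnKC 1?ltnW // addnC.
rewrite lognM ?expn_gt0 ?addn1 // pfactorK // logn_coprime ?addn0 //.
by rewrite coprime2n /= oddX subn_eq0 leqNgt lt_ab.
Qed.

Lemma addpow2_inj_lt a b c d : a < b -> c < d ->
  2 ^ a + 2 ^ b = 2 ^ c + 2 ^ d -> a = c /\ b = d.
Proof.
move=> lt_ab lt_cd eq_sum.
have eq_ac : a = c by rewrite -(logn2_addpow2 lt_ab) eq_sum logn2_addpow2.
split=> //; apply: (@expnI 2) => //; apply/eqP.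
by rewrite -(eqn_add2l (2 ^ a)) eq_sum eq_ac.
Qed.

Lemma addpow2_inj a b c d : a != b -> c != d ->
  2 ^ a + 2 ^ b = 2 ^ c + 2 ^ d -> (a = c /\ b = d) \/ (a = d /\ b = c).
Proof.
case: (ltngtP a b) => // lt_ab _; case: (ltngtP c d) => // lt_cd _ eq_sum.
- by left; apply: addpow2_inj_lt.
- by right; apply: addpow2_inj_lt; rewrite // eq_sum addnC.
- by right; case: (@addpow2_inj_lt b a c d); rewrite // addnC.
- by left; case: (@addpow2_inj_lt b a d c); rewrite // addnC eq_sum addnC.
Qed.

Section CompleteGraph.
Variables (T : finType) (e : rel T).
Hypothesis e_complete : forall u v, e u v = (u != v).

Definition singletons (f : T -> seq nat) : {set T} := [set u | ncard (f u) == 1].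

Lemma card_mono_edges_complete f : (forall u, f u != [::]) ->
  #|mono_edges e f| = 'C(#|singletons f|, 2).
Proof.
move=> nz_f; rewrite -cards_draws; apply: eq_card => E; rewrite !inE.
apply/existsP/andP => [[u /existsP [v /and3P [/eqP -> uv]]]|].
  rewrite e_complete in uv; rewrite ncard_sumset_eq1 // cards2 uv.
  by case/andP=> fu fv; rewrite subUset !sub1set !inE fu fv.
case=> sub_E /cards2P [u [v [uv defE]]]; exists u; apply/existsP; exists v.
move: sub_E; rewrite defE subUset !sub1set !inE => /andP [fu fv].
by rewrite eqxx e_complete uv ncard_sumset_eq1 ?fu.
Qed.

(* Two vertices with non-singleton labels would span an edge whose label is
   strictly larger than both. *)
Lemma WIASI_card_singletons f : WIASI e f -> #|T|.-1 <= #|singletons f|.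
Proof.
case=> [[nz_f _] weak_f]; rewrite -(cardsC (singletons f)).
suff : #|~: singletons f| <= 1 by lia.
apply/card_le1_eqP => u v; rewrite !inE => fu fv.
apply/eqP/negPn/negP; rewrite eq_sym => uv.
have gt1 w : ncard (f w) != 1 -> 1 < ncard (f w).
  by move: (nz_f w); rewrite -ncard_gt0; lia.
have := weak_f u v; rewrite e_complete uv => /(_ isT).
have := ncard_sumsetl_lt (nz_f u) (gt1 v fv).
have := ncard_sumsetl_lt (nz_f v) (gt1 u fu).
by rewrite (eq_ncard (sumsetC (f v) (f u))); lia.
Qed.

Definition vertex_index (u : T) : nat := enum_rank u.

Lemma vertex_index_inj : injective vertex_index.
Proof. by move=> u v /val_inj/enum_rank_inj. Qed.

(* The vertex of index 0 gets [{0, 1}] and the vertex of index [i > 0] gets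
   [{2^i}]: every label has maximum [2^i], and the maximum [2^i + 2^j] of an
   edge label identifies the edge. *)
Definition pow2_label (u : T) : seq nat :=
  if vertex_index u == 0 then [:: 0; 1] else [:: 2 ^ vertex_index u].

Lemma pow2_label_neq_nil u : pow2_label u != [::].
Proof. by rewrite /pow2_label; case: ifP. Qed.

Lemma pow2_label_max u : 2 ^ vertex_index u \in pow2_label u /\
  forall a, a \in pow2_label u -> a <= 2 ^ vertex_index u.
Proof.
rewrite /pow2_label; case: eqP => [->|_]; split=> [|a]; rewrite ?inE //.
- by case/orP => /eqP ->.
- by move/eqP ->.
Qed.

Lemma ncard_pow2_label u :
  ncard (pow2_label u) = if vertex_index u == 0 then 2 else 1.
Proof. by rewrite /pow2_label; case: eqP. Qed.

Lemma sumset_pow2_label_max u v :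
  let m := 2 ^ vertex_index u + 2 ^ vertex_index v in
  m \in sumset (pow2_label u) (pow2_label v) /\
  forall x, x \in sumset (pow2_label u) (pow2_label v) -> x <= m.
Proof.
have [[mem_u le_u] [mem_v le_v]] := (pow2_label_max u, pow2_label_max v).
split; first by apply/mem_sumsetP; exists (2 ^ vertex_index u), (2 ^ vertex_index v).
by move=> x /mem_sumsetP [a [b [ha hb ->]]]; rewrite leq_add ?le_u ?le_v.
Qed.

Lemma WIASI_pow2_label : WIASI e pow2_label.
Proof.
have index_neq u v : u != v -> vertex_index u != vertex_index v.
  by apply: contra => /eqP/vertex_index_inj ->.
split; [split; [exact: pow2_label_neq_nil|split]|].
- move=> u v eq_uv; apply: vertex_index_inj; apply/eqP.
  have [[mem_u le_u] [mem_v le_v]] := (pow2_label_max u, pow2_label_max v).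
  rewrite eq_uv in mem_u; rewrite -eq_uv in mem_v.
  by rewrite -(eqn_exp2l _ _ (ltnSn 1)) eqn_leq le_u ?le_v.
- move=> u v x y; rewrite !e_complete => /index_neq uv /index_neq xy eq_sum.
  have [mem_uv le_uv] := sumset_pow2_label_max u v.
  have [mem_xy le_xy] := sumset_pow2_label_max x y.
  have /(addpow2_inj uv xy) : 2 ^ vertex_index u + 2 ^ vertex_index v =
                              2 ^ vertex_index x + 2 ^ vertex_index y.
    by apply/eqP; rewrite eqn_leq le_xy -?eq_sum // le_uv // eq_sum.
  by case=> -[/vertex_index_inj -> /vertex_index_inj ->] //; rewrite setUC.
- move=> u v; rewrite e_complete => /index_neq uv.
  rewrite ncard_sumset_max ?pow2_label_neq_nil ?ncard_pow2_label //.
  by move: uv; case: (vertex_index u =P 0) => [->|_]; case: (_ =P 0) => [->|].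
Qed.

Lemma card_singletons_pow2_label : #|singletons pow2_label| = #|T|.-1.
Proof.
case: (posnP #|T|) => [T0|T_gt0].
  by apply/eqP; rewrite T0 -leqn0 -T0 max_card.
set u0 := enum_val (Ordinal T_gt0).
suff -> : singletons pow2_label = [set~ u0] by rewrite cardsC1.
have index_u0 : vertex_index u0 = 0 by rewrite /vertex_index enum_valK.
apply/setP => u; rewrite !inE ncard_pow2_label -{1}index_u0.
by rewrite (inj_eq vertex_index_inj); case: (u == u0).
Qed.

Lemma sparing_number_complete : sparing_number_is e 'C(#|T|.-1, 2).
Proof.
split.
  exists pow2_label; split; first exact: WIASI_pow2_label.
  rewrite card_mono_edges_complete ?card_singletons_pow2_label //.
  exact: pow2_label_neq_nil.
move=> f f_WIASI; rewrite card_mono_edges_complete; last by case: f_WIASI => -[].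
exact/leq_bin2l/WIASI_card_singletons.
Qed.

End CompleteGraph.

Theorem mainTheorem7 (T : finType) (e : rel T) (K S : {set T}) (r s t : nat) :
  simple_graph e -> no_isolated e -> connected e ->
  K :&: S = set0 -> K :|: S = [set: T] ->
  (forall u v, u \in K -> v \in K -> u != v -> e u v) ->
  (forall u v, u \in S -> v \in S -> ~~ e u v) ->
  #|K| = r -> #|S| = s -> 3 <= t ->
  sparing_number_is (graph_pow e t) (((r + s - 1) * (r + s - 2)) %/ 2).
Proof.
move=> simple_e no_iso _ KS0 KS clique indep Kr Ss t_ge3.
have card_T : #|T| = r + s by rewrite -cardsT -KS cardsU KS0 cards0 subn0 Kr Ss.
have -> : ((r + s - 1) * (r + s - 2)) %/ 2 = 'C(#|T|.-1, 2).
  by rewrite bin2 divn2 card_T -!subn1 -subnDA.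
apply: sparing_number_complete.
exact: split_graph_pow_complete simple_e no_iso KS clique indep t_ge3.
Qed.
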